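(* Let $n\ge1$. As polynomials in the indeterminates $x$ and $y$ with coefficients in $\mathbb{Q}[\mathfrak{S}_n]$, \[\rho(x)\phi(y)=\rho(xy),\qquad \overline{\rho}(x)\phi(y)=\overline{\rho}(xy),\] where $\phi(y)=\sum_{\pi\in\mathfrak{S}_n}\binom{y+n-1-\operatorname{des}(\pi)}{n}\pi$, $\rho(x)=\sum_{\pi\in\mathfrak{S}_n}\Omega'(\pi;x/2)\pi$ and $\overline{\rho}(x)=\sum_{\pi\in\mathfrak{S}_n}\overline{\Omega}'(\pi;x/2)\pi$.
   Context: $\mathfrak{S}_n$ is the symmetric group on $[n]$, permutations are words $(\pi(1),\dots,\pi(n))$, and multiplication in $\mathbb{Q}[\mathfrak{S}_n]$ is composition. $\operatorname{des}(\pi)$ is the number of $i\in[n-1]$ with $\pi(i)>\pi(i+1)$, and $\binom{y+m}{n}$ denotes the polynomial $(y+m)(y+m-1)\cdots(y+m-n+1)/n!$ in $y$. Let $Z$ be a finite totally ordered set each of whose elements is ''plus-type'' or ''minus-type''. For $\pi\in\mathfrak{S}_n$ let $N(\pi;Z)$ be the number of sequences $(a_1,\dots,a_n)\in Z^n$ with $a_1\le\dots\le a_n$ such that for every $s\in[n-1]$: if $\pi(s)<\pi(s+1)$ then $a_s<a_{s+1}$ or ($a_s=a_{s+1}$ is plus-type); if $\pi(s)>\pi(s+1)$ then $a_s<a_{s+1}$ or ($a_s=a_{s+1}$ is minus-type). For a positive integer $k$, $\Omega'(\pi;k)=N(\pi;\{\bar1<1<\dots<\bar k<k\})$ and $\overline{\Omega}'(\pi;k)=N(\pi;\{0<\bar1<1<\dots<\overline{k-1}<k-1<\bar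 k\})$, with $0$ and unbarred $j$ plus-type and barred $\bar j$ minus-type. As functions of $k$ these are restrictions of unique polynomials with rational coefficients, denoted by the same symbols. *)

From Stdlib Require Import ClassicalEpsilon.
From mathcomp Require Import all_boot all_order all_algebra all_fingroup.
Set Implicit Arguments. Unset Strict Implicit. Unset Printing Implicit Defensive.
Import Order.TTheory GRing.Theory Num.Theory.
Local Open Scope ring_scope.

(* Permutations pi : 'S_n act on 'I_n = {0,...,n-1}; the word of pi is
   (pi 0, ..., pi (n-1)) (0-based shift of the paper's 1-based indexing). *)

Definition consec (n : nat) (i j : 'I_n) : bool := (val j == (val i).+1)%N.

Definition des (n : nat) (pi : 'S_n) : nat :=
  #|[set i : 'I_n | [exists j : 'I_n, consec i j && (pi j < pi i)%N]]|.

(* N(pi; Z) where Z = 'I_m is totally ordered by its natural order and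
   plus t = true iff t is plus-type (false = minus-type). *)
Definition Ncount (n m : nat) (plus : 'I_m -> bool) (pi : 'S_n) : nat :=
  #|[set a : {ffun 'I_n -> 'I_m} |
     [forall i : 'I_n, forall j : 'I_n, consec i j ==>
        [&& (a i <= a j)%N &
          if (pi i < pi j)%N
          then (a i < a j)%N || ((a i == a j) && plus (a i))
          else (a i < a j)%N || ((a i == a j) && ~~ plus (a i))]]]|.

(* Z = {bar1 < 1 < ... < bar k < k}: position t (0-based) in 'I_(2k) is
   plus-type iff t is odd. *)
Definition Omega'_count (n : nat) (pi : 'S_n) (k : nat) : nat :=
  Ncount (fun t : 'I_(k.*2) => odd t) pi.

(* Z = {0 < bar1 < 1 < ... < bar(k-1) < k-1 < bar k}: position t (0-based)
   in 'I_(2k) is plus-type iff t is even. *)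
Definition Omegabar'_count (n : nat) (pi : 'S_n) (k : nat) : nat :=
  Ncount (fun t : 'I_(k.*2) => ~~ odd t) pi.

(* "the unique polynomial with rational coefficients whose restriction to
   positive integers is f" (chosen with Hilbert's epsilon). *)
Definition poly_of_count (f : nat -> nat) : {poly rat} :=
  epsilon (inhabits 0) (fun P : {poly rat} =>
    forall k : nat, (0 < k)%N -> P.[k%:R] = (f k)%:R).

Definition Omega'_poly (n : nat) (pi : 'S_n) : {poly rat} :=
  poly_of_count (Omega'_count pi).
Definition Omegabar'_poly (n : nat) (pi : 'S_n) : {poly rat} :=
  poly_of_count (Omegabar'_count pi).

Definition binom_poly (m : int) (n : nat) : {poly rat} :=
  (n`!%:R)^-1 *: \prod_(i < n) ('X + (m - (i : nat)%:Z)%:~R%:P).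

(* Bivariate polynomials Q[x,y] = {poly {poly rat}}: x is the inner
   variable, y the outer one. *)
Definition bipoly := {poly {poly rat}}.
Definition xvar : bipoly := ('X)%:P.
Definition yvar : bipoly := 'X.

Definition evalQ (p : {poly rat}) (t : bipoly) : bipoly :=
  (map_poly (fun c : rat => c%:P%:P) p).[t].

(* elements of Q[x,y][S_n] as coefficient families 'S_n -> bipoly;
   product = convolution with composition (tau o upsilon)(i) = tau (upsilon i) *)
Definition galg_mul (n : nat) (a b : 'S_n -> bipoly) : 'S_n -> bipoly :=
  fun sigma => \sum_(tau : 'S_n) \sum_(ups : 'S_n |
                  [forall i : 'I_n, tau (ups i) == sigma i]) a tau * b ups.

Definition phi (n : nat) (t : bipoly) : 'S_n -> bipoly :=
  fun pi => evalQ (binom_poly ((n%:Z - 1) - (des pi)%:Z) n) t.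

Definition rho (n : nat) (t : bipoly) : 'S_n -> bipoly :=
  fun pi => evalQ (Omega'_poly pi) (t * (2%:R^-1)%:P%:P).

Definition rhobar (n : nat) (t : bipoly) : 'S_n -> bipoly :=
  fun pi => evalQ (Omegabar'_poly pi) (t * (2%:R^-1)%:P%:P).

From Stdlib Require Import ClassicalEpsilon FunctionalExtensionality.
From mathcomp Require Import all_boot all_order all_algebra all_fingroup.
From mathcomp Require Import zify ring.
Import GRing.Theory Num.Theory.

(* Standardizing a word a : [n] -> Z (rank the positions by letter, breaking
   ties between equal letters left to right on plus-type letters and right to
   left on minus-type ones) shows that N(pi; Z) counts the words whose
   standardization is pi^-1.  If Z is made of m consecutive copies of a block
   Z0, a word w over Z is encoded by its word u of letters in Z0 together with
   the word v over the all-plus chain [m] that records, along std u, which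
   copy each letter lies in; then std w = std u * std v.  Hence N(-; Z) is the
   convolution of N(-; Z0) with N(-; [m] all plus) = binom(m + n - 1 - des, n).
   For the two-letter blocks of Omega' and Omegabar' this is the identity
   rho(x) phi(y) = rho(xy) at x = 2k, y = m for all positive integers k, m,
   which determines the polynomials. *)

Open Scope nat_scope.

Lemma card_in_bij (T T' : finType) (A : {set T}) (B : {set T'})
    (f : T -> T') (g : T' -> T) :
  {in A, forall x, f x \in B} -> {in B, forall y, g y \in A} ->
  {in A, cancel f g} -> {in B, cancel g f} -> #|A| = #|B|.
Proof.
move=> fAB gBA fK gK; apply/eqP; rewrite eqn_leq; apply/andP; split.
- rewrite -(card_in_imset (f:=f) (D:=A)); last exact: can_in_inj fK.
  by apply: subset_leq_card; apply/subsetP=> y /imsetP [x xA ->]; apply: fAB.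
- rewrite -(card_in_imset (f:=g) (D:=B)); last exact: can_in_inj gK.
  by apply: subset_leq_card; apply/subsetP=> y /imsetP [x xA ->]; apply: gBA.
Qed.

Lemma card_ord_ltn n x : x <= n -> #|[set t : 'I_n | t < x]| = x.
Proof.
move=> xn.
have -> : [set t : 'I_n | t < x] = [set widen_ord xn t | t : 'I_x].
  apply/setP=> t; rewrite inE; apply/idP/imsetP.
  - by move=> tx; exists (Ordinal tx) => //; apply: val_inj.
  - by case=> s _ ->; rewrite /= ltn_ord.
by rewrite card_imset ?card_ord // => a b /(congr1 val) ab; apply: val_inj.
Qed.

Lemma card_set_sum (T : finType) (p : pred T) : #|[set x | p x]| = \sum_x p x.
Proof.
by rewrite -sum1_card big_mkcond /=; apply: eq_bigr => x _; rewrite inE; case: (p x).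
Qed.

Lemma ltn_mulD {a b K N : nat} : a < K -> b < N -> a * N + b < K * N.
Proof.
move=> aK bN; apply: (@leq_trans (a.+1 * N)); first by rewrite mulSn addnC ltn_add2r.
by rewrite leq_mul2r aK orbT.
Qed.

Lemma ltn_lex N a b a' b' : b < N -> b' < N ->
  (a * N + b < a' * N + b') = (a < a') || ((a == a') && (b < b')).
Proof.
move=> bN b'N; case: (ltngtP a a') => [aa'|a'a|<-]; last by rewrite ltn_add2l.
  by rewrite (leq_trans (ltn_mulD aa' bN)) ?leq_addr.
by apply/negbTE; rewrite -leqNgt ltnW // (leq_trans (ltn_mulD a'a b'N)) ?leq_addr.
Qed.

Lemma eqn_lex N a b a' b' : b < N -> b' < N ->
  (a * N + b == a' * N + b') = (a == a') && (b == b').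
Proof.
move=> bN b'N; apply/idP/idP; last by case/andP=> /eqP -> /eqP ->.
move=> /eqP e; have N0 : 0 < N by apply: leq_ltn_trans bN.
have -> : a = a'.
  by have := congr1 (divn^~ N) e; rewrite /= !divnMDl // !divn_small // !addn0.
have -> : b = b' by have := congr1 (modn^~ N) e; rewrite /= !modnMDl !modn_small.
by rewrite !eqxx.
Qed.

Section Consecutive.
Context {n : nat}.
Implicit Types i j s t : 'I_n.

Lemma consec_ind (Q : 'I_n -> Prop) :
  (forall i, val i = 0 -> Q i) -> (forall i j, consec i j -> Q i -> Q j) ->
  forall i, Q i.
Proof.
move=> Q0 QS; suff QE d i : val i = d -> Q i by move=> i; apply: (QE _ i erefl).
elim: d i => [|d IHd] i iE; first exact: Q0.
have dn : d < n by rewrite (ltn_trans _ (ltn_ord i)) // iE.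
by apply: (QS (Ordinal dn)); [rewrite /consec iE | apply: IHd].
Qed.

Lemma consec_homo (r : nat -> nat -> Prop) (f : 'I_n -> nat) :
  (forall y x z, r x y -> r y z -> r x z) ->
  (forall i j, consec i j -> r (f i) (f j)) -> forall i j, i < j -> r (f i) (f j).
Proof.
move=> r_trans r_consec i; apply: consec_ind => [j -> //|j j' jj' IHj].
move: (jj'); rewrite /consec => /eqP ->; rewrite ltnS leq_eqVlt => /orP [/eqP ij|ij].
- by rewrite (val_inj ij); apply: r_consec.
- exact: r_trans (IHj ij) (r_consec _ _ jj').
Qed.

Lemma consec_homo_leq {f : 'I_n -> nat} :
  (forall i j, consec i j -> f i <= f j) -> forall i j, i <= j -> f i <= f j.
Proof.
move=> f_consec i j; rewrite leq_eqVlt => /orP [/eqP/val_inj -> //|].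
exact: (@consec_homo (fun x y => x <= y) f leq_trans).
Qed.

Lemma consec_lt s t : consec s t -> s < t.
Proof. by rewrite /consec => /eqP ->. Qed.

Lemma consec_neq s t : consec s t -> s != t.
Proof. by move/consec_lt; rewrite ltn_neqAle => /andP [/negbTE st _]; rewrite -val_eqE st. Qed.

End Consecutive.

Section RankPermutation.
Context {n : nat} {f : 'I_n -> nat}.
Hypothesis f_inj : injective f.

Definition rank (i : 'I_n) : nat := #|[set j | f j < f i]|.

Lemma rank_lt i : rank i < n.
Proof.
rewrite /rank -[X in _ < X](card_ord n) -cardsT; apply: proper_card.
by apply/properP; split; [apply/subsetP=> x; rewrite inE | exists i; rewrite ?inE ?ltnn].
Qed.

Lemma ltn_rank i j : f i < f j -> rank i < rank j.
Proof.
move=> fij; apply: proper_card; apply/properP; split.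
  by apply/subsetP=> x; rewrite !inE => /ltn_trans; apply.
by exists i; rewrite !inE ?ltnn.
Qed.

Lemma ltn_rankE i j : (rank i < rank j) = (f i < f j).
Proof.
case: (ltngtP (f i) (f j)) => [|fji|/f_inj ->]; first exact: ltn_rank.
  by apply/negbTE; rewrite -leqNgt ltnW // ltn_rank.
by rewrite ltnn.
Qed.

Lemma rank_inj : injective (fun i => Ordinal (rank_lt i)).
Proof.
move=> i j /(congr1 val) /= rij; apply: f_inj.
by case: (ltngtP (f i) (f j)) => // /ltn_rank; rewrite rij ltnn.
Qed.

Definition rank_perm : 'S_n := perm rank_inj.

Lemma rank_perm_mono i j : (rank_perm i < rank_perm j) = (f i < f j).
Proof. by rewrite !permE /= ltn_rankE. Qed.

Lemma rank_perm_unique (a : 'S_n) :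
  (forall i j, (a i < a j) = (f i < f j)) -> a = rank_perm.
Proof.
move=> a_mono; apply/permP => i; apply: val_inj; rewrite permE /= /rank.
have -> : [set j | f j < f i] = a @^-1: [set t : 'I_n | t < a i].
  by apply/setP=> j; rewrite !inE a_mono.
by rewrite card_preimset ?card_ord_ltn //; [apply: ltnW | apply: perm_inj].
Qed.

End RankPermutation.

Definition orient {n : nat} (b : bool) (i : 'I_n) : nat := if b then val i else n.-1 - i.

Lemma orient_lt n b (i : 'I_n) : orient b i < n.
Proof. by have := ltn_ord i; rewrite /orient; case: b => /=; lia. Qed.

Lemma orient_inj n b : injective (@orient n b).
Proof.
move=> i j; rewrite /orient; have := ltn_ord i; have := ltn_ord j.
by case: b => /= ? ? ij; apply: val_inj => /=; lia.
Qed.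

Definition std_key {n m : nat} (P : nat -> bool) (u : {ffun 'I_n -> 'I_m}) (i : 'I_n) :=
  u i * n + orient (P (u i)) i.

Lemma std_key_inj {n m : nat} (P : nat -> bool) (u : {ffun 'I_n -> 'I_m}) :
  injective (std_key P u).
Proof.
move=> i j /eqP; rewrite /std_key eqn_lex ?orient_lt // => /andP [/eqP uij /eqP].
by rewrite uij => /orient_inj.
Qed.

Definition std {n m : nat} (P : nat -> bool) (u : {ffun 'I_n -> 'I_m}) : 'S_n :=
  rank_perm (std_key_inj P u).

Lemma std_mono {n m : nat} (P : nat -> bool) (u : {ffun 'I_n -> 'I_m}) i j :
  (std P u i < std P u j) = (std_key P u i < std_key P u j).
Proof. exact: rank_perm_mono. Qed.

Lemma std_unique {n m : nat} (P : nat -> bool) (u : {ffun 'I_n -> 'I_m}) (a : 'S_n) :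
  (forall i j, (a i < a j) = (std_key P u i < std_key P u j)) -> a = std P u.
Proof. exact: rank_perm_unique. Qed.

Definition std_fiber {n : nat} (m : nat) (P : nat -> bool) (g : 'S_n) :=
  [set u : {ffun 'I_n -> 'I_m} | std P u == g].

Lemma sum_std n m (P : nat -> bool) (F : 'S_n -> nat) :
  \sum_(u : {ffun 'I_n -> 'I_m}) F (std P u) = \sum_(a : 'S_n) #|std_fiber m P a| * F a.
Proof.
rewrite (partition_big (std P) predT) //=; apply: eq_bigr => a _.
rewrite -sum_nat_const; apply: eq_big => [u|u /eqP ->] //; by rewrite inE.
Qed.

Lemma Ncount_condE n m (P : nat -> bool) (a : 'I_n -> 'I_m) (pi : 'S_n) s t :
  s != t ->
  [&& a s <= a t &
      if pi s < pi t then (a s < a t) || ((a s == a t) && P (a s))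
      else (a s < a t) || ((a s == a t) && ~~ P (a s))] =
  (a s * n + orient (P (a s)) (pi s) < a t * n + orient (P (a t)) (pi t)).
Proof.
move=> st; rewrite ltn_lex ?orient_lt //.
case: (ltngtP (a s) (a t)) => [|//|ast] /=; first by case: ifP.
rewrite ast (val_inj ast) eqxx /=; have := ltn_ord (pi s); have := ltn_ord (pi t).
have := @perm_inj _ pi s t.
case: (P (a t)); rewrite /orient /=; case: (ltngtP (pi s) (pi t)) => //=; try lia.
by move=> e pi_inj _ _; move: st; rewrite (pi_inj (val_inj e)) eqxx.
Qed.

Lemma Ncount_std_fiber n m (P : nat -> bool) (pi : 'S_n) :
  Ncount (fun t : 'I_m => P t) pi = #|std_fiber m P pi^-1%g|.
Proof.
apply: (@card_in_bij _ _ _ _ (fun a : {ffun 'I_n -> 'I_m} => [ffun i => a (pi^-1%g i)])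
                              (fun u => [ffun s => u (pi s)])).
- move=> a; rewrite !inE => /forallP a_cond; apply/eqP/esym/std_unique => i j.
  rewrite -{2}(permKV pi i) -{2}(permKV pi j).
  move: (pi^-1%g i) (pi^-1%g j) => s t; rewrite /std_key !ffunE !permK.
  pose F s := a s * n + orient (P (a s)) (pi s).
  have F_consec s' t' : consec s' t' -> F s' < F t'.
    move=> st'; rewrite /F -Ncount_condE ?consec_neq //.
    by move: (a_cond s') => /forallP /(_ t') /implyP; apply.
  have F_mono := @consec_homo _ (fun x y => x < y) F ltn_trans F_consec.
  case: (ltngtP s t) => [st|ts|/val_inj ->]; first by rewrite F_mono.
  + by apply/esym/negbTE; rewrite -leqNgt ltnW // F_mono.
  + by rewrite !ltnn.
- move=> u; rewrite !inE => /eqP std_u.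
  apply/forallP => s; apply/forallP => t; apply/implyP => st.
  rewrite Ncount_condE ?consec_neq // !ffunE.
  have := std_mono P u (pi s) (pi t); rewrite std_u !permK /std_key => <-.
  exact: consec_lt.
- by move=> a _; apply/ffunP => i; rewrite !ffunE permK.
- by move=> u _; apply/ffunP => i; rewrite !ffunE permKV.
Qed.

Definition allplus : nat -> bool := fun=> true.

Section BlockDecomposition.
Variables (n K m M : nat) (P : nat -> bool).
Hypotheses (K_gt0 : 0 < K) (M_eq : M = m * K).
Hypothesis P_periodic : forall x y, y < K -> P (x * K + y) = P y.

Lemma block_lt (x : 'I_m) (y : 'I_K) : x * K + y < M.
Proof.
by rewrite M_eq ltn_mulD.
Qed.

Lemma block_index_lt (x : 'I_M) : x %/ K < m.
Proof. by rewrite ltn_divLR // -M_eq. Qed.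

Definition block_word (uv : {ffun 'I_n -> 'I_K} * {ffun 'I_n -> 'I_m}) :
    {ffun 'I_n -> 'I_M} :=
  [ffun i => Ordinal (block_lt (uv.2 (std P uv.1 i)) (uv.1 i))].

Definition block_residue (w : {ffun 'I_n -> 'I_M}) : {ffun 'I_n -> 'I_K} :=
  [ffun i => Ordinal (ltn_pmod (w i) K_gt0)].

Definition block_split (w : {ffun 'I_n -> 'I_M}) :=
  (block_residue w,
   [ffun t => Ordinal (block_index_lt (w ((std P (block_residue w))^-1 t)%g))]).

Lemma block_wordK : cancel block_word block_split.
Proof.
move=> [u v]; have residueE : block_residue (block_word (u, v)) = u.
  by apply/ffunP => i; apply: val_inj; rewrite !ffunE /= modnMDl modn_small.
rewrite /block_split residueE; congr pair; apply/ffunP => t; apply: val_inj.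
by rewrite !ffunE /= permKV divnMDl // divn_small // addn0.
Qed.

Lemma block_splitK : cancel block_split block_word.
Proof.
by move=> w; apply/ffunP => i; apply: val_inj; rewrite !ffunE /= permK -divn_eq.
Qed.

Lemma std_block_word u v : std P (block_word (u, v)) = (std P u * std allplus v)%g.
Proof.
apply/esym/std_unique => i j; rewrite !permM std_mono /std_key /allplus /=.
rewrite ltn_lex ?ltn_ord // std_mono /std_key !ffunE /= !P_periodic ?ltn_ord //.
by rewrite !mulnDl -!mulnA -!addnA [in RHS]ltn_lex ?ltn_mulD ?orient_lt ?ltn_ord.
Qed.

Lemma card_std_fiber_block g : #|std_fiber M P g| =
  \sum_(a : 'S_n) \sum_(b : 'S_n | (a * b == g)%g)
    #|std_fiber K P a| * #|std_fiber m allplus b|.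
Proof.
transitivity #|[set uv : {ffun 'I_n -> 'I_K} * {ffun 'I_n -> 'I_m} |
                 (std P uv.1 * std allplus uv.2 == g)%g]|.
  apply: (@card_in_bij _ _ _ _ block_split block_word).
  - by move=> w; rewrite !inE -std_block_word -surjective_pairing block_splitK.
  - by move=> [u v]; rewrite !inE /= std_block_word.
  - by move=> w _; apply: block_splitK.
  - by move=> uv _; apply: block_wordK.
have -> : #|[set uv : {ffun 'I_n -> 'I_K} * {ffun 'I_n -> 'I_m} |
               (std P uv.1 * std allplus uv.2 == g)%g]| =
    \sum_(u : {ffun 'I_n -> 'I_K}) \sum_(v : {ffun 'I_n -> 'I_m})
      ((std P u * std allplus v)%g == g : nat).
  by rewrite pair_big card_set_sum.
under eq_bigr => u _ do rewrite (sum_std _ _ allplus (fun b => (std P u * b == g)%g : nat)).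
rewrite (sum_std _ _ P (fun a => \sum_b #|std_fiber m allplus b| * (a * b == g)%g)).
apply: eq_bigr => a _; rewrite big_distrr [RHS]big_mkcond /=.
by apply: eq_bigr => b _; case: (_ == _); rewrite ?muln0 ?muln1 // mulnC.
Qed.

End BlockDecomposition.

Lemma Ncount_block n K m M (P : nat -> bool) : 0 < K -> M = m * K ->
  (forall x y, y < K -> P (x * K + y) = P y) -> forall s : 'S_n,
  Ncount (fun t : 'I_M => P t) s =
  \sum_(a : 'S_n) \sum_(b : 'S_n | [forall i, a (b i) == s i])
     Ncount (fun t : 'I_K => P t) a * Ncount (fun t : 'I_m => allplus t) b.
Proof.
move=> K_gt0 M_eq P_periodic s.
rewrite Ncount_std_fiber (card_std_fiber_block _ _ _ _ _ K_gt0 M_eq P_periodic).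
rewrite (reindex_inj invg_inj); apply: eq_bigr => a _ /=.
rewrite (reindex_inj invg_inj) /=; apply: eq_big => [b|b _]; last by rewrite !Ncount_std_fiber.
have -> : [forall i, a (b i) == s i] = (b * a == s)%g.
  by apply/forallP/eqP => [ab_s|<- i]; [apply/permP => i; rewrite permM; apply/eqP | rewrite permM].
by rewrite -invMg eqg_invLR invgK.
Qed.

Lemma sorted_ltn_tnth n N (t : n.-tuple 'I_N) :
  sorted ltn (map val t) = [forall i, forall j, consec i j ==> (tnth t i < tnth t j)].
Proof.
have nthE (i : 'I_n) : nth 0 (map val t) i = tnth t i.
  by rewrite (nth_map (tnth t i)) ?size_tuple // -tnth_nth.
apply/(sortedP 0)/forallP => [t_sorted i|t_lt k].
  apply/forallP => j; apply/implyP => /eqP jE.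
  have i1n : (val i).+1 < n by rewrite -jE ltn_ord.
  by have := t_sorted i; rewrite size_map size_tuple => /(_ i1n); rewrite -jE !nthE.
rewrite size_map size_tuple => k1n; have kn : k < n by apply: ltn_trans k1n.
have := t_lt (Ordinal kn) => /forallP /(_ (Ordinal k1n)) /implyP.
by rewrite /consec /= eqxx -(nthE (Ordinal kn)) -(nthE (Ordinal k1n)); apply.
Qed.

Definition ltn_ffuns n N := [set c : {ffun 'I_n -> 'I_N} |
  [forall i, forall j, consec i j ==> (c i < c j)]].

Lemma card_ltn_ffuns n N : #|ltn_ffuns n N| = 'C(N, n).
Proof.
rewrite -card_ltn_sorted_tuples.
apply: (@card_in_bij _ _ _ _ (fun c : {ffun 'I_n -> 'I_N} => [tuple c i | i < n])
   (fun t : n.-tuple 'I_N => [ffun i => tnth t i])).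
- move=> c; rewrite !inE sorted_ltn_tnth => /forallP c_lt; apply/forallP => i.
  by apply/forallP => j; rewrite !tnth_mktuple; move: (c_lt i) => /forallP.
- move=> t; rewrite !inE sorted_ltn_tnth => /forallP t_lt; apply/forallP => i.
  by apply/forallP => j; rewrite !ffunE; move: (t_lt i) => /forallP.
- by move=> c _; apply/ffunP => i; rewrite ffunE tnth_mktuple.
- by move=> t _; apply: eq_from_tnth => i; rewrite tnth_mktuple ffunE.
Qed.

Lemma Ncount_cond_allplus m (x y : 'I_m) (b : bool) :
  [&& x <= y & if b then (x < y) || ((x == y) && allplus x)
               else (x < y) || ((x == y) && ~~ allplus x)] = (if b then x <= y else x < y).
Proof.
rewrite /allplus /= andbT andbF orbF; case: b.
  by rewrite -val_eqE /= [(_ == _) || _]orbC -leq_eqVlt andbb.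
by case: (ltngtP x y) => //= xy; rewrite ltnW.
Qed.

Section Ascents.
Variables (n' : nat) (u : 'S_n'.+1).
Local Notation n := n'.+1.

Definition asc (s : 'I_n) : bool := [exists t, consec s t && (u s < u t)].

Definition asc_before (i : 'I_n) : nat := \sum_(s : 'I_n | s < i) asc s.

Lemma asc_consec i j : consec i j -> asc i = (u i < u j).
Proof.
move=> ij; apply/existsP/idP => [[t /andP [it ut]]|]; last by exists j; rewrite ij.
suff -> : j = t by [].
by apply: val_inj; move: ij it; rewrite /consec => /eqP -> /eqP ->.
Qed.

Lemma asc_before_consec i j :
  consec i j -> asc_before j = asc_before i + asc i.
Proof.
move=> ij; rewrite /asc_before (bigD1 i) /=; last exact: consec_lt.
rewrite addnC; congr (_ + _); apply: eq_bigl => s.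
by move: ij; rewrite /consec => /eqP ->; rewrite ltnS -val_eqE /=; case: ltngtP.
Qed.

Lemma asc_before_le i : asc_before i <= i.
Proof.
apply: (@leq_trans (\sum_(s : 'I_n | s < i) 1)); first by apply: leq_sum => s _; case: asc.
by rewrite sum1dep_card card_ord_ltn // ltnW.
Qed.

Lemma asc_before_last : asc_before ord_max + des u = n'.
Proof.
rewrite /des card_set_sum (bigID (fun s : 'I_n => s < n')) /=.
rewrite [X in _ + (_ + X)]big1; last first.
  move=> s sn; case: existsP => // [[t /andP [/eqP st _]]].
  by move: sn; rewrite -ltnS -st ltn_ord.
rewrite addn0 /asc_before -big_split /=.
rewrite (eq_bigr (fun _ => 1)); first by rewrite sum1dep_card card_ord_ltn.
move=> s sn; have s1n : s.+1 < n by [].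
have st : consec s (Ordinal s1n) by rewrite /consec.
rewrite (asc_consec _ _ st); case: existsP => [[t /andP [/eqP tE]]|no_des].
  have -> : t = Ordinal s1n by apply: val_inj.
  by move=> ut; rewrite ltnNge ltnW.
have := @perm_inj _ u s (Ordinal s1n).
case: (ltngtP (u s) (u (Ordinal s1n))) => // [us|/val_inj us /(_ us) /(congr1 val) /=]; last lia.
by case: no_des; exists (Ordinal s1n); rewrite st us.
Qed.

Lemma asc_before_bound i : asc_before i <= n' - des u.
Proof.
have le_last : asc_before i <= asc_before ord_max.
  apply: (consec_homo_leq _ i ord_max (leq_ord i)) => i' j' ij.
  by rewrite (asc_before_consec _ _ ij) leq_addr.
by have := asc_before_last; lia.
Qed.

Lemma asc_before_le_ltn_ffun {N : nat} {c : {ffun 'I_n -> 'I_N}} :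
  c \in ltn_ffuns n N -> forall i, asc_before i <= c i.
Proof.
rewrite inE => /forallP c_lt.
suff ge_pos : forall i : 'I_n, i <= c i by move=> i; apply: leq_trans (asc_before_le i) (ge_pos i).
apply: consec_ind => [i -> //|i j ij ci].
move: (c_lt i) => /forallP /(_ j) /implyP /(_ ij).
by move: ij; rewrite /consec => /eqP ->; apply: leq_ltn_trans.
Qed.

Lemma ltn_ffun_sub_asc_before_mono {N : nat} {c : {ffun 'I_n -> 'I_N}} :
  c \in ltn_ffuns n N -> forall i j : 'I_n, i <= j -> c i - asc_before i <= c j - asc_before j.
Proof.
move=> cS; apply: consec_homo_leq => i j ij.
have := asc_before_le_ltn_ffun cS i; move: cS; rewrite inE => /forallP c_lt.
move: (c_lt i) => /forallP /(_ j) /implyP /(_ ij).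
by rewrite (asc_before_consec _ _ ij); have := leq_b1 (asc i); lia.
Qed.

(* Adding the number of earlier ascents turns the words counted by N(u; [m])
   into the strictly increasing words in [m + n - 1 - des u]. *)
Lemma Ncount_allplus m' :
  Ncount (fun t : 'I_m'.+1 => allplus t) u = 'C((m' + (n' - des u)).+1, n).
Proof.
rewrite -card_ltn_ffuns /Ncount; set X := n' - des u.
have shift_lt (a : {ffun 'I_n -> 'I_m'.+1}) i : a i + asc_before i < (m' + X).+1.
  by have := ltn_ord (a i); have := asc_before_bound i; rewrite -/X; lia.
have unshift_lt (c : {ffun 'I_n -> 'I_(m' + X).+1}) :
    c \in ltn_ffuns n (m' + X).+1 -> forall i, c i - asc_before i < m'.+1.
  move=> cS i; have := ltn_ffun_sub_asc_before_mono cS i ord_max (leq_ord i).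
  by have := ltn_ord (c ord_max); have := asc_before_last; rewrite -/X; lia.
apply: (@card_in_bij _ _ _ _
   (fun a : {ffun 'I_n -> 'I_m'.+1} =>
      [ffun i => inord (a i + asc_before i)] : {ffun 'I_n -> 'I_(m' + X).+1})
   (fun c : {ffun 'I_n -> 'I_(m' + X).+1} =>
      [ffun i => inord (c i - asc_before i)] : {ffun 'I_n -> 'I_m'.+1})).
- move=> a; rewrite !inE => /forallP a_cond; apply/forallP => i; apply/forallP => j.
  apply/implyP => ij; move: (a_cond i) => /forallP /(_ j) /implyP /(_ ij).
  rewrite Ncount_cond_allplus !ffunE !inordK ?shift_lt //.
  by rewrite (asc_before_consec _ _ ij) (asc_consec _ _ ij); case: (u i < u j); lia.
- move=> c cS; rewrite inE; apply/forallP => i; apply/forallP => j; apply/implyP => ij.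
  rewrite Ncount_cond_allplus !ffunE !inordK ?(unshift_lt c cS) //.
  have := ltn_ffun_sub_asc_before_mono cS i j (ltnW (consec_lt _ _ ij)).
  have := asc_before_le_ltn_ffun cS i.
  move: cS; rewrite inE => /forallP /(_ i) /forallP /(_ j) /implyP /(_ ij).
  by rewrite (asc_before_consec _ _ ij) (asc_consec _ _ ij); case: (u i < u j) => /=; lia.
- move=> a _; apply/ffunP => i; apply: val_inj; rewrite !ffunE /=.
  by rewrite (inordK (shift_lt a i)) addnK inordK.
- move=> c cS; apply/ffunP => i; rewrite !ffunE /=.
  by rewrite (inordK (unshift_lt c cS i)) subnK ?asc_before_le_ltn_ffun // inord_val.
Qed.

End Ascents.

Lemma des_le n' (u : 'S_n'.+1) : des u <= n'.
Proof. by have := asc_before_last n' u; lia. Qed.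

Local Open Scope ring_scope.

Lemma prod_natr_ffact (N k : nat) : \prod_(i < k) (N%:R - i%:R : rat) = (N ^_ k)%:R.
Proof.
elim: k => [|k IHk]; first by rewrite big_ord0 ffactn0.
rewrite big_ord_recr /= IHk ffactnSr natrM.
by case: (leqP k N) => [kN|Nk]; [rewrite natrB | rewrite ffact_small // !mul0r].
Qed.

Lemma binom_poly_nat (n' d m' : nat) : (d <= n')%N ->
  (binom_poly ((n'.+1%:Z - 1) - d%:Z) n'.+1).[m'.+1%:R] =
  ('C((m' + (n' - d)).+1, n'.+1))%:R.
Proof.
move=> dn; rewrite /binom_poly hornerZ horner_prod.
set N := (m' + (n' - d)).+1.
rewrite (eq_bigr (fun i : 'I_n'.+1 => N%:R - (i : nat)%:R)); last first.
  move=> i _; rewrite hornerD hornerX hornerC.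
  have -> : (m'.+1%:R : rat) = (m'.+1%:Z)%:~R by [].
  have -> : (N%:R - (i : nat)%:R : rat) = (N%:Z - (i : nat)%:Z)%:~R by rewrite intrB.
  by rewrite -intrD; congr intr; rewrite /N; lia.
rewrite prod_natr_ffact -bin_ffact natrM mulrC -mulrA mulfV ?mulr1 //.
by rewrite pnatr_eq0 -lt0n fact_gt0.
Qed.

Definition ev2 (a b : rat) (q : bipoly) : rat :=
  horner_eval b (map_poly (horner_eval a) q).

Lemma ev2M a b p q : ev2 a b (p * q) = ev2 a b p * ev2 a b q.
Proof. by rewrite /ev2 !rmorphM. Qed.

Lemma ev2_sum a b (I : finType) (P : pred I) (F : I -> bipoly) :
  ev2 a b (\sum_(i | P i) F i) = \sum_(i | P i) ev2 a b (F i).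
Proof. by rewrite /ev2 !rmorph_sum. Qed.

Lemma ev2C a b (c : rat) : ev2 a b c%:P%:P = c.
Proof. by rewrite /ev2 map_polyC /= !horner_evalE !hornerC. Qed.

Lemma ev2_xvar a b : ev2 a b xvar = a.
Proof. by rewrite /ev2 /xvar map_polyC /= !horner_evalE hornerC hornerX. Qed.

Lemma ev2_yvar a b : ev2 a b yvar = b.
Proof. by rewrite /ev2 /yvar map_polyX !horner_evalE hornerX. Qed.

Lemma ev2_evalQ a b p t : ev2 a b (evalQ p t) = p.[ev2 a b t].
Proof.
rewrite /evalQ /ev2 -horner_map /= -horner_map -!map_poly_comp map_poly_id //= => c _.
by rewrite map_polyC /= !horner_evalE !hornerC.
Qed.

Lemma poly_eq0_on_inj (p : {poly rat}) (f : nat -> rat) :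
  injective f -> (forall k, p.[f k] = 0) -> p = 0.
Proof.
move=> f_inj p_f; apply/eqP; apply: contraT => p_neq0.
have := @max_poly_roots _ p (map f (iota 0 (size p))) p_neq0.
rewrite size_map size_iota ltnn (map_inj_uniq f_inj) iota_uniq; apply=> //.
by apply/allP => x /mapP [k _ ->]; rewrite /root p_f.
Qed.

Lemma bipoly_eq_on_grid (p q : bipoly) :
  (forall k m, ev2 (k.+1.*2)%:R m.+1%:R p = ev2 (k.+1.*2)%:R m.+1%:R q) -> p = q.
Proof.
move=> pq_grid; apply/eqP; rewrite -subr_eq0; apply/eqP/polyP => i; rewrite coef0.
apply: (@poly_eq0_on_inj _ (fun k => (k.+1.*2)%:R)) => [x y /eqP|k].
  by rewrite eqr_nat => /eqP; rewrite -!muln2; lia.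
rewrite -horner_evalE -coef_map.
suff -> : map_poly (horner_eval (k.+1.*2)%:R) (p - q) = 0 by rewrite coef0.
apply: (@poly_eq0_on_inj _ (fun m => m.+1%:R)) => [x y /eqP|m].
  by rewrite eqr_nat => /eqP [].
have := pq_grid k m; rewrite /ev2 !horner_evalE => pq_km.
by rewrite rmorphB hornerD hornerN pq_km subrr.
Qed.

Definition Ncount2 {n : nat} (P : nat -> bool) (k : nat) (s : 'S_n) : nat :=
  Ncount (fun t : 'I_(k.*2) => P t) s.

Section TwoLetterBlocks.
Variables (n' : nat) (P : nat -> bool).
Hypothesis P_periodic : forall a b, P (a.*2 + b)%N = P b.
Local Notation n := n'.+1.

Lemma Ncount2_mul k m (s : 'S_n) : (0 < k)%N ->
  Ncount2 P (k * m) s = (\sum_(a : 'S_n) \sum_(b : 'S_n | [forall i, a (b i) == s i])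
     Ncount2 P k a * Ncount (fun t : 'I_m => allplus t) b)%N.
Proof.
move=> k_gt0; apply: Ncount_block; first by rewrite double_gt0.
  by rewrite -!muln2; ring.
by move=> x y _; rewrite -doubleMr P_periodic.
Qed.

Lemma Ncount2_mul_nat k m (s : 'S_n) : (0 < k)%N ->
  (Ncount2 P (k * m.+1) s)%:R = \sum_(a : 'S_n) \sum_(b : 'S_n | [forall i, a (b i) == s i])
     (Ncount2 P k a)%:R * (binom_poly ((n%:Z - 1) - (des b)%:Z) n).[m.+1%:R] :> rat.
Proof.
move=> k_gt0; rewrite Ncount2_mul // natr_sum; apply: eq_bigr => a _.
rewrite natr_sum; apply: eq_bigr => b _.
by rewrite binom_poly_nat ?des_le // Ncount_allplus natrM.
Qed.

(* The epsilon in poly_of_count is met by the convolution of the counts for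
   the one-block alphabet with the binomial polynomials. *)
Lemma poly_of_Ncount2 (s : 'S_n) k : (0 < k)%N ->
  (poly_of_count (fun k => Ncount2 P k s)).[k%:R] = (Ncount2 P k s)%:R.
Proof.
move: k; apply: (@epsilon_spec _ (inhabits 0) (fun Q : {poly rat} =>
   forall k, (0 < k)%N -> Q.[k%:R] = (Ncount2 P k s)%:R)).
exists (\sum_(a : 'S_n) \sum_(b : 'S_n | [forall i, a (b i) == s i])
          (Ncount2 P 1 a)%:R *: binom_poly ((n%:Z - 1) - (des b)%:Z) n).
case=> // k _; have -> : Ncount2 P k.+1 s = Ncount2 P (1 * k.+1) s by rewrite mul1n.
rewrite Ncount2_mul_nat // horner_sum.
by apply: eq_bigr => a _; rewrite horner_sum; apply: eq_bigr => b _; rewrite hornerZ.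
Qed.

Lemma galg_mul_phi :
  let F (t : bipoly) (s : 'S_n) := evalQ (poly_of_count (fun k => Ncount2 P k s)) t in
  galg_mul (F (xvar * (2%:R^-1)%:P%:P)) (phi yvar) = F (xvar * yvar * (2%:R^-1)%:P%:P).
Proof.
move=> F; apply: functional_extensionality => s; apply: bipoly_eq_on_grid => k m.
have half_x : (k.+1.*2)%:R * 2%:R^-1 = k.+1%:R :> rat by rewrite -muln2 natrM mulfK.
have half_xy : (k.+1.*2)%:R * m.+1%:R * 2%:R^-1 = (k.+1 * m.+1)%:R :> rat.
  by rewrite mulrAC half_x natrM.
rewrite /F ev2_evalQ !ev2M ev2_xvar ev2_yvar ev2C half_xy poly_of_Ncount2 ?muln_gt0 //.
rewrite Ncount2_mul_nat // /galg_mul ev2_sum; apply: eq_bigr => a _.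
rewrite ev2_sum; apply: eq_bigr => b _.
by rewrite ev2M ev2_evalQ ev2M ev2_xvar ev2C half_x poly_of_Ncount2 // /phi ev2_evalQ ev2_yvar.
Qed.

End TwoLetterBlocks.

Theorem theorem3p7 (n : nat) (hn : (1 <= n)%N) :
  galg_mul (rho (n:=n) xvar) (phi (n:=n) yvar) = rho (n:=n) (xvar * yvar) /\
  galg_mul (rhobar (n:=n) xvar) (phi (n:=n) yvar) = rhobar (n:=n) (xvar * yvar).
Proof.
case: n hn => // n' _.
have odd_periodic a b : odd (a.*2 + b) = odd b by rewrite oddD odd_double.
have even_periodic a b : ~~ odd (a.*2 + b) = ~~ odd b by rewrite odd_periodic.
split; first exact: (galg_mul_phi n' odd odd_periodic).
exact: (galg_mul_phi n' (fun x => ~~ odd x) even_periodic).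
Qed.
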